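(* Let $G$ be a $3$-edge-colorable cubic graph of order $2n\geq 8$. Then $\chi'_{[n-1]}(G)=4$.
   Context: All graphs are finite, simple (no loops, no parallel edges), connected and cubic. For a positive integer $k$, a $[k]$-matching of $G$ is a matching of $G$ with exactly $k$ edges. The excessive $[k]$-index $\chi'_{[k]}(G)$ is the minimum number of $[k]$-matchings of $G$ whose union is $E(G)$; if some edge of $G$ lies in no $[k]$-matching, one sets $\chi'_{[k]}(G)=\infty$. *)

(* A finite simple graph is a symmetric irreflexive relation
   [g : rel T] on a finite type [T]; an edge is the 2-element vertex set {x,y}. *)
From HB Require Import structures.
From mathcomp Require Import all_boot.
Set Implicit Arguments. Unset Strict Implicit. Unset Printing Implicit Defensive.

Section Graphs.
Variable T : finType.
Implicit Types (g : rel T).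

Definition simple_graph g := symmetric g /\ irreflexive g.

Definition edges g : {set {set T}} :=
  [set [set x; y] | x in T, y in T & g x y].

Definition connected_graph g := forall x y : T, connect g x y.

Definition cubic g := forall x : T, #|[set y | g x y]| = 3.

Definition matching g (M : {set {set T}}) := M \subset edges g /\ trivIset M.

Definition kmatching g k (M : {set {set T}}) := matching g M /\ #|M| = k.

Definition kcover g k m :=
  exists s : seq {set {set T}},
    size s = m /\ (forall M, M \in s -> kmatching g k M) /\
    \bigcup_(M <- s) M = edges g.

(* chi'_[k](G) = m  (m finite): m is the minimum number of [k]-matchings
   whose union is E(G).  If no such cover exists, chi'_[k](G) = infinity,
   and this predicate is false for every m. *)
Definition excessive_index_eq g k m :=
  kcover g k m /\ forall m', m' < m -> ~ kcover g k m'.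

Definition three_edge_colorable g :=
  exists c : {set T} -> 'I_3,
    forall e1 e2, e1 \in edges g -> e2 \in edges g -> e1 != e2 ->
      ~~ [disjoint e1 & e2] -> c e1 != c e2.
End Graphs.

(* Fix a proper 3-edge-colouring; its colour classes C0, C1, C2 are perfect
   matchings with n edges each, so |E(G)| = 3n.
   - Lower bound: m [n-1]-matchings cover at most m(n-1) < 3n edges if m <= 3.
   - Upper bound: C0 - f0, C1 - e1, C2 - e2 are [n-1]-matchings, so it is
     enough to find one more [n-1]-matching through f0, e1 and e2.  Call a
     vertex u twisted when its colour-1 mate differs from the colour-2 mate of
     its colour-0 mate v.  If no vertex were twisted, the three mate
     involutions would form a Klein four-group and {u, v, mate1 u, mate2 u}
     would be a whole component, contradicting connectivity and |V| > 4.  At a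
     twisted u, the edges e1 = u.mate1(u) and e2 = v.mate2(v) are disjoint;
     removing from C0 the (at most 3) edges meeting them and adding e1, e2
     gives a matching with at least n-1 edges, from which we extract an
     [n-1]-matching containing e1, e2 and a surviving edge f0 of C0. *)

From mathcomp Require Import all_boot.
From mathcomp Require Import zify.
Set Implicit Arguments. Unset Strict Implicit. Unset Printing Implicit Defensive.

Lemma exists_set_between (T : finType) (B A : {set T}) k :
  B \subset A -> #|B| <= k <= #|A| ->
  exists C : {set T}, [/\ B \subset C, C \subset A & #|C| = k].
Proof.
move=> sBA /andP[leBk leKA]; have [m cardA] : exists m, #|A| = k + m.
  by exists (#|A| - k); lia.
elim: m A cardA sBA {leKA} => [|m IH] A cardA sBA.
  by exists A; rewrite addn0 in cardA.
have /card_gt0P[a] : 0 < #|A :\: B| by rewrite cardsD (setIidPr sBA); lia.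
rewrite inE => /andP[aNB aA].
have cardAa : #|A :\ a| = k + m by move: cardA; rewrite (cardsD1 a A) aA; lia.
have sBAa : B \subset A :\ a.
  apply/subsetP => x xB; rewrite !inE (subsetP sBA) // andbT.
  by apply: contraNneq aNB => <-.
have [C [sBC sCA cardC]] := IH _ cardAa sBAa.
by exists C; split => //; apply: subset_trans sCA (subsetDl _ _).
Qed.

Section Matchings.
Variables (T : finType) (g : rel T).

Lemma edgeI x y : g x y -> [set x; y] \in edges g.
Proof. by move=> gxy; apply/imset2P; exists x y; rewrite ?inE. Qed.

Lemma edgeP e : e \in edges g -> exists x y, g x y /\ e = [set x; y].
Proof. by case/imset2P => x y _; rewrite inE => gxy ->; exists x, y. Qed.

Lemma kmatchingD1 k (M : {set {set T}}) e :
  kmatching g k.+1 M -> e \in M -> kmatching g k (M :\ e).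
Proof.
move=> [[sME trivM] cardM] eM; split; [split|].
- exact: subset_trans (subsetDl _ _) sME.
- exact: trivIsetS (subsetDl _ _) trivM.
- by move: cardM; rewrite (cardsD1 e M) eM add1n => -[].
Qed.

Lemma kmatching_through k (B M : {set {set T}}) :
  matching g M -> B \subset M -> #|B| <= k <= #|M| ->
  exists N : {set {set T}}, kmatching g k N /\ B \subset N.
Proof.
move=> [sME trivM] sBM bounds.
have [N [sBN sNM cardN]] := exists_set_between sBM bounds.
by exists N; split => //; split => //; split;
  [exact: subset_trans sNM sME | exact: trivIsetS sNM trivM].
Qed.

Lemma kcover_card k m : kcover g k m -> #|edges g| <= m * k.
Proof.
move=> [s [<- [kmatch <-]]]; elim: s kmatch => [|M s IH] kmatch.
  by rewrite big_nil cards0.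
rewrite big_cons mulSn; apply: leq_trans (leq_card_setU _ _) _.
rewrite (kmatch M (mem_head _ _)).2 leq_add2l IH // => M' M's.
by apply: kmatch; rewrite inE M's orbT.
Qed.

End Matchings.

Definition proper_colouring (T : finType) (g : rel T) (c : {set T} -> 'I_3) :=
  forall e1 e2, e1 \in edges g -> e2 \in edges g -> e1 != e2 ->
    ~~ [disjoint e1 & e2] -> c e1 != c e2.

Definition col0 : 'I_3 := @Ordinal 3 0 isT.
Definition col1 : 'I_3 := @Ordinal 3 1 isT.
Definition col2 : 'I_3 := @Ordinal 3 2 isT.

Lemma colourP (i : 'I_3) : [\/ i = col0, i = col1 | i = col2].
Proof.
by case: i => [[|[|[|k]]] lt_i3]; [constructor 1|constructor 2|constructor 3|];
  rewrite //; apply: val_inj.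
Qed.

Section ColourClasses.
Variables (T : finType) (g : rel T) (c : {set T} -> 'I_3).
Hypotheses (g_simple : simple_graph g) (g_cubic : cubic g).
Hypothesis c_proper : proper_colouring g c.

Lemma colour_inj x y y' : g x y -> g x y' -> c [set x; y] = c [set x; y'] -> y = y'.
Proof.
have g_irr := g_simple.2.
move=> gxy gxy' same_col; apply/eqP/negPn/negP => neq_yy'.
suff : c [set x; y] != c [set x; y'] by rewrite same_col eqxx.
apply: c_proper (edgeI gxy) (edgeI gxy') _ _.
- apply/eqP => same_edge; have : y \in [set x; y'] by rewrite -same_edge set22.
  rewrite !inE => /orP[/eqP y_x|/eqP y_y']; last by rewrite y_y' eqxx in neq_yy'.
  by move: gxy; rewrite y_x g_irr.
- by rewrite -setI_eq0; apply/set0Pn; exists x; rewrite !inE !eqxx.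
Qed.

(* Cubicity: the three edges at x use all three colours. *)
Lemma exists_mate x i : exists y, g x y && (c [set x; y] == i).
Proof.
have col_inj : {in [set y | g x y] &, injective (fun y => c [set x; y])}.
  by move=> y y'; rewrite !inE; exact: colour_inj.
have all_cols : [set c [set x; y] | y in [set y | g x y]] = setT.
  by apply/eqP; rewrite eqEcard subsetT card_in_imset // g_cubic cardsT card_ord.
have : i \in [set c [set x; y] | y in [set y | g x y]] by rewrite all_cols inE.
by case/imsetP => y; rewrite inE => gxy ->; exists y; rewrite gxy eqxx.
Qed.

Definition mate (i : 'I_3) (x : T) : T := odflt x [pick y | g x y && (c [set x; y] == i)].

Lemma mateP i x : g x (mate i x) /\ c [set x; mate i x] = i.
Proof.
rewrite /mate; case: pickP => [y /andP[gxy /eqP] // | no_mate].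
by have [y] := exists_mate x i; rewrite no_mate.
Qed.

Lemma mate_uniq i x y : g x y -> c [set x; y] = i -> mate i x = y.
Proof.
have [gxm col_m] := mateP i x; move=> gxy col_y.
by apply: colour_inj gxm gxy _; rewrite col_m col_y.
Qed.

Lemma mateK i : involutive (mate i).
Proof.
move=> x; have [gxm col_m] := mateP i x; apply: mate_uniq.
  by rewrite g_simple.1.
by rewrite setUC.
Qed.

Lemma mate_neq i x : mate i x != x.
Proof.
by apply/eqP => mx_x; have [] := mateP i x; rewrite mx_x g_simple.2.
Qed.

Lemma mate_colour_inj i j x : mate i x = mate j x -> i = j.
Proof. by move=> same; rewrite -(mateP i x).2 -(mateP j x).2 same. Qed.

Definition colour_class i : {set {set T}} := [set [set x; mate i x] | x in T].

Lemma colour_class_at i e x : e \in colour_class i -> x \in e -> e = [set x; mate i x].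
Proof.
case/imsetP => y _ ->; rewrite !inE => /orP[] /eqP -> //.
by rewrite mateK setUC.
Qed.

Lemma colour_class_colour i e : e \in colour_class i -> c e = i.
Proof. by case/imsetP => x _ ->; exact: (mateP i x).2. Qed.

Lemma edge_in_colour_class e : e \in edges g -> e \in colour_class (c e).
Proof.
case/edgeP => x [y [gxy ->]].
by apply/imsetP; exists x; rewrite // (mate_uniq gxy (erefl _)).
Qed.

Lemma colour_class_matching i : matching g (colour_class i).
Proof.
split.
  by apply/subsetP => e /imsetP[x _ ->]; apply: edgeI; exact: (mateP i x).1.
apply/trivIsetP => A B A_i B_i; apply: contraR => meet.
move: meet; rewrite -setI_eq0 => /set0Pn[x]; rewrite inE => /andP[xA xB].
by rewrite (colour_class_at A_i xA) (colour_class_at B_i xB).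
Qed.

(* Colour classes partition the vertices into pairs. *)
Lemma card_colour_class i : #|T| = #|colour_class i| * 2.
Proof.
rewrite -cardsT; apply: card_uniform_partition => [e /imsetP[x _ ->]|].
  by rewrite cards2 eq_sym mate_neq.
have [_ triv] := colour_class_matching i.
apply/and3P; split => //.
- apply/eqP/setP => x; rewrite inE; apply/bigcupP.
  by exists [set x; mate i x]; [exact: imset_f | rewrite set21].
- by apply/imsetP => -[x _ /setP/(_ x)]; rewrite !inE eqxx.
Qed.

(* Handshake count: the three classes partition E(G), so 2|E| = 3|V|. *)
Lemma card_edges : 3 * #|T| = #|edges g| * 2.
Proof.
have edgesE : edges g = colour_class col0 :|: colour_class col1 :|: colour_class col2.
  apply/eqP; rewrite eqEsubset !subUset !(colour_class_matching _).1 !andbT.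
  apply/subsetP => e /edge_in_colour_class; rewrite !inE.
  by case: (colourP (c e)) => -> ->; rewrite ?orbT.
have disj i j : i != j -> colour_class i :&: colour_class j = set0.
  move=> neq_ij; apply/eqP/set0Pn => -[e]; rewrite inE.
  case/andP => /colour_class_colour ce_i /colour_class_colour ce_j.
  by move: neq_ij; rewrite -ce_i -ce_j eqxx.
rewrite edgesE cardsU setIUl !disj // setU0 cards0 subn0.
rewrite cardsU disj // cards0 subn0 !mulnDl -!card_colour_class; lia.
Qed.

(* If no vertex is twisted, the mates satisfy the Klein four-group relations
   mate_i (mate_j x) = mate_k x for {i, j, k} = {0, 1, 2}, so the four
   vertices u, mate_0 u, mate_1 u, mate_2 u are closed under adjacency. *)
Lemma untwisted_closed :
  (forall x, mate col1 x = mate col2 (mate col0 x)) ->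
  forall u y y', y \in [set u; mate col0 u; mate col1 u; mate col2 u] -> g y y' ->
    y' \in [set u; mate col0 u; mate col1 u; mate col2 u].
Proof.
set p0 := mate col0; set p1 := mate col1; set p2 := mate col2 => untwisted.
have p00 x : p0 (p0 x) = x := mateK col0 x.
have p11 x : p1 (p1 x) = x := mateK col1 x.
have p22 x : p2 (p2 x) = x := mateK col2 x.
have p20 x : p2 (p0 x) = p1 x by rewrite untwisted.
have p10 x : p1 (p0 x) = p2 x by rewrite untwisted p00.
have p21 x : p2 (p1 x) = p0 x by rewrite untwisted p22.
have p01 x : p0 (p1 x) = p2 x by apply: (can_inj p22); rewrite p20 p11 p22.
have p02 x : p0 (p2 x) = p1 x by rewrite -p01 p00.
have p12 x : p1 (p2 x) = p0 x by rewrite -p10 p11.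
move=> u y y' y_near gyy'; rewrite -(mate_uniq gyy' (erefl _)).
case: (colourP (c [set y; y'])) => ->; rewrite -/p0 -/p1 -/p2;
  move: y_near; rewrite !inE -!orbA => /or4P [] /eqP ->;
  by rewrite ?p00 ?p11 ?p22 ?p20 ?p10 ?p21 ?p01 ?p02 ?p12 eqxx ?orbT.
Qed.

Lemma exists_twisted_vertex : connected_graph g -> 4 < #|T| ->
  exists u, mate col1 u != mate col2 (mate col0 u).
Proof.
move=> g_conn card_T; apply/existsP/contraT => /existsPn untwisted.
have {}untwisted x : mate col1 x = mate col2 (mate col0 x).
  by apply/eqP; rewrite -[_ == _]negbK untwisted.
have /card_gt0P[u _] : 0 < #|T| by lia.
pose A := [set u; mate col0 u; mate col1 u; mate col2 u].
have A_closed : closed g A := intro_closed (sym_connect_sym g_simple.1)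
  (fun y y' gyy' yA => untwisted_closed untwisted yA gyy').
have sub_TA : [set: T] \subset A.
  apply/subsetP => y _; rewrite -(closed_connect A_closed (g_conn u y)).
  by rewrite !inE eqxx.
have := subset_leq_card sub_TA.
by rewrite cardsT !cardsU !cards1; lia.
Qed.

Lemma colour_class_kmatching n i : #|T| = 2 * n -> kmatching g n (colour_class i).
Proof.
move=> card_T; split; first exact: colour_class_matching.
by have := card_colour_class i; lia.
Qed.

Lemma cover_by_four_matchings k e0 e1 e2 N : #|T| = 2 * k.+1 ->
  e0 \in colour_class col0 -> e1 \in colour_class col1 -> e2 \in colour_class col2 ->
  kmatching g k N -> [set e0; e1; e2] \subset N -> kcover g k 4.
Proof.
move=> card_T e0_0 e1_1 e2_2 kN sub_N.
have classD1 i e : e \in colour_class i -> kmatching g k (colour_class i :\ e).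
  by apply: kmatchingD1; exact: colour_class_kmatching.
exists [:: colour_class col0 :\ e0; colour_class col1 :\ e1; colour_class col2 :\ e2; N].
split=> //; split.
  by move=> M; rewrite !inE => /or4P [] /eqP ->; try exact: classD1.
have [[sub_NE _] _] := kN.
apply/eqP; rewrite eqEsubset !big_cons big_nil !subUset sub0set sub_NE.
rewrite !(subset_trans (subsetDl _ _) (colour_class_matching _).1) /=.
apply/subsetP => e /edge_in_colour_class e_ce.
have cover_one i f : f \in [set e0; e1; e2] -> e \in colour_class i ->
    (e \in colour_class i :\ f) || (e \in N).
  move=> f_new e_i; rewrite !inE e_i andbT; case: (e =P f) => [->|] //=.
  by rewrite (subsetP sub_N).
have [new0 new1 new2] : [/\ e0 \in [set e0; e1; e2], e1 \in [set e0; e1; e2]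
                        & e2 \in [set e0; e1; e2]] by rewrite !inE !eqxx ?orbT.
rewrite !in_setU in_set0 orbF.
case: (colourP (c e)) => ce; rewrite ce in e_ce.
- by case/orP: (cover_one _ _ new0 e_ce) => ->; rewrite ?orbT.
- by case/orP: (cover_one _ _ new1 e_ce) => ->; rewrite ?orbT.
- by case/orP: (cover_one _ _ new2 e_ce) => ->; rewrite ?orbT.
Qed.

Section TwistedVertex.
Variable u : T.
Hypothesis u_twisted : mate col1 u != mate col2 (mate col0 u).

Definition twist_edge1 := [set u; mate col1 u].
Definition twist_edge2 := [set mate col0 u; mate col2 (mate col0 u)].

(* Together with v = mate_0 u, these are the ends of e1 and e2; the colour-0
   edges at them are [blocked] (the edge at v is the one at u). *)
Definition twist_vertices := [set u; mate col1 u; mate col2 (mate col0 u)].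

Definition blocked : {set {set T}} := [set [set x; mate col0 x] | x in twist_vertices].

Definition swapped := (colour_class col0 :\: blocked) :|: [set twist_edge1; twist_edge2].

Lemma twist_edge1_colour : twist_edge1 \in colour_class col1.
Proof. exact: imset_f. Qed.

Lemma twist_edge2_colour : twist_edge2 \in colour_class col2.
Proof. exact: imset_f. Qed.

(* Twistedness is exactly what makes e1 and e2 vertex-disjoint. *)
Lemma twist_edges_disjoint : [disjoint twist_edge1 & twist_edge2].
Proof.
rewrite -setI_eq0; apply/set0Pn => -[x]; rewrite !inE => /andP[].
case/orP => /eqP -> /orP[] /eqP.
- by move/eqP; rewrite eq_sym (negbTE (mate_neq _ _)).
- by rewrite -{1}(mateK col0 u) => /mate_colour_inj/(congr1 val).
- by move/mate_colour_inj/(congr1 val).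
- by move/eqP; rewrite (negbTE u_twisted).
Qed.

Lemma twist_edges_blocked x : x \in twist_edge1 :|: twist_edge2 ->
  [set x; mate col0 x] \in blocked.
Proof.
rewrite !inE -!orbA => /or4P [] /eqP ->; try by apply: imset_f; rewrite !inE eqxx ?orbT.
by apply/imsetP; exists u; rewrite ?inE ?eqxx // mateK setUC.
Qed.

(* Swapping keeps a matching: surviving C0 edges avoid the ends of e1, e2. *)
Lemma swapped_matching : matching g swapped.
Proof.
have [sub0 triv0] := colour_class_matching col0.
split.
  rewrite subUset (subset_trans (subsetDl _ _) sub0) /=.
  by apply/subsetP => e /set2P[] ->; apply: (subsetP (colour_class_matching _).1);
    [exact: twist_edge1_colour | exact: twist_edge2_colour].
apply: trivIsetU; first exact: trivIsetD.
  apply/trivIsetP => A B /set2P[] -> /set2P[] ->; rewrite ?eqxx // => _;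
    [|rewrite disjoint_sym]; exact: twist_edges_disjoint.
rewrite -setI_eq0; apply/set0Pn => -[x]; rewrite inE.
case/andP => /bigcupP[e /setDP[e0 e_free] xe] /bigcupP[f f_twist xf].
have : x \in twist_edge1 :|: twist_edge2.
  by case/set2P: f_twist xf => ->; rewrite in_setU => ->; rewrite ?orbT.
by move/twist_edges_blocked; rewrite -(colour_class_at e0 xe) (negbTE e_free).
Qed.

Lemma card_unblocked : #|colour_class col0| <= #|colour_class col0 :\: blocked| + 3.
Proof.
have card_blocked : #|blocked| <= 3.
  by apply: leq_trans (leq_imset_card _ _) _; rewrite !cardsU !cards1; lia.
by rewrite cardsD; have := subset_leq_card (subsetIr (colour_class col0) blocked); lia.
Qed.

Lemma card_swapped : #|swapped| = #|colour_class col0 :\: blocked| + 2.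
Proof.
have col_twist1 := colour_class_colour twist_edge1_colour.
have col_twist2 := colour_class_colour twist_edge2_colour.
have new_twist :
    (colour_class col0 :\: blocked) :&: [set twist_edge1; twist_edge2] = set0.
  apply/eqP/set0Pn => -[e]; rewrite !inE => /andP[/andP[_ /colour_class_colour ce]].
  by case/orP => /eqP e_twist; move: ce; rewrite e_twist ?col_twist1 ?col_twist2.
have neq_twist : twist_edge1 != twist_edge2.
  by apply/eqP => same; move: col_twist1; rewrite same col_twist2 => /(congr1 val).
by rewrite cardsU new_twist cards0 cards2 neq_twist addn2 subn0.
Qed.

Lemma twisted_kcover n : #|T| = 2 * n -> 3 < n -> kcover g n.-1 4.
Proof.
move=> card_T n_gt3.
have card_T' : #|T| = 2 * n.-1.+1 by rewrite prednK //; lia.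
have := card_unblocked; rewrite (colour_class_kmatching col0 card_T).2 => card_free.
have /card_gt0P[f0 f0_free] : 0 < #|colour_class col0 :\: blocked| by lia.
have f0_0 : f0 \in colour_class col0 by case/setDP: f0_free.
have sub_swapped : [set f0; twist_edge1; twist_edge2] \subset swapped.
  apply/subsetP => e; rewrite !inE -orbA => /orP[/eqP ->|->]; last by rewrite orbT.
  by move: f0_free; rewrite inE => ->.
have bounds : #|[set f0; twist_edge1; twist_edge2]| <= n.-1 <= #|swapped|.
  by rewrite card_swapped !cardsU !cards1; lia.
have [N [kN sub_N]] := kmatching_through swapped_matching sub_swapped bounds.
exact: cover_by_four_matchings card_T' f0_0 twist_edge1_colour twist_edge2_colour
  kN sub_N.
Qed.

End TwistedVertex.

End ColourClasses.

Theorem proposition3 (T : finType) (g : rel T) (n : nat) :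
  simple_graph g -> connected_graph g -> cubic g ->
  three_edge_colorable g ->
  #|T| = 2 * n -> 8 <= 2 * n ->
  excessive_index_eq g n.-1 4.
Proof.
move=> g_simple g_conn g_cubic [c c_proper] card_T n_ge4.
(* Upper bound: switching at a twisted vertex. *)
split.
  have [|u u_twisted] := exists_twisted_vertex g_simple g_cubic c_proper g_conn.
    by rewrite card_T; lia.
  by apply: (twisted_kcover g_simple g_cubic c_proper u_twisted card_T); lia.
(* Lower bound: fewer than four [n-1]-matchings cannot cover 3n edges. *)
move=> m m_lt4 /kcover_card card_cover.
have := card_edges g_simple g_cubic c_proper; rewrite card_T.
have : m * n.-1 <= 3 * n.-1 by rewrite leq_mul2r -ltnS m_lt4 orbT.
lia.
Qed.
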